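(* Let $mG$ be a finite canonical misinformation game, $\Gamma=(\mathcal{AD}^*(\{mG\}),E)$ its adaptation graph, and $\Gamma'$ its loopless version. Then $mG$ is the only source node of $\Gamma'$, i.e., $mG$ is the only vertex of $\Gamma'$ with in-degree $d^-_{\Gamma'}(mG)=0$.
   Context: A normal-form game is $G=\langle N,S,P\rangle$ with finite players $N$, finite pure strategy sets $S_i$, positions $S=\times_i S_i$, payoffs $P_i:S\to\mathbb{R}$. A misinformation game $mG=\langle G^0,G^1,\dots,G^{|N|}\rangle$ consists of the actual game $G^0$ and subjective games $G^i$; it is canonical if all $G^i=\langle N,S,P^i\rangle$ differ from $G^0$ only in payoffs and in every $G^i$ all players have equally many pure strategies. $NME(mG)$ is the set of profiles $\sigma=(\sigma_1,\dots,\sigma_{|N|})$ such that each $\sigma_i$ is player $i$'s component of some Nash equilibrium of $G^i$. $\chi(\sigma)=\mathrm{supp}(\sigma_1)\times\dots\times\mathrm{supp}(\sigma_{|N|})$. For $\vec v\in S$, $mG_{\vec v}$ is obtained by replacing, in every $P^i$ ($i\ge1$), the payoff vector at position $\vec v$ by $P^0(\vec v)$. For a set $M$ of misinformation games, $\mathcal{AD}(M)=\{mG_{\vec u}: mG\in M,\sigma\in NME(mG),\vec u\in\chi(\sigma)\}$, $\mathcal{AD}^{(0)}(M)=M$, $\mathcal{AD}^{(t+1)}(M)=\mathcal{AD}^{(t)}(\mathcal{AD}(M))$, $\mathcal{AD}^*(M)=\bigcup_{t\ge0}\mathcal{AD}^{(t)}(M)$. The adaptation graph $\Gamma$ is the directed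 graph with vertex set $\mathcal{AD}^*(\{mG\})$ and an edge $(mG^1,mG^2)$ iff $mG^2=(mG^1)_{\vec v}$ for some $\sigma\in NME(mG^1)$ and $\vec v\in\chi(\sigma)$. Its loopless version $\Gamma'$ has the same vertices and the edges of $\Gamma$ with $mG^1\neq mG^2$. *)

From HB Require Import structures.
From mathcomp Require Import all_boot all_order all_algebra.
Set Implicit Arguments. Unset Strict Implicit. Unset Printing Implicit Defensive.
Import Order.TTheory GRing.Theory Num.Theory.
Local Open Scope ring_scope.

(* Canonical misinformation games with players 'I_n, every player having the
   pure strategy set 'I_k in every game (G^0 and all G^i). *)
Section MG.
Variables (R : realFieldType) (n k : nat).

Definition position := {ffun 'I_n -> 'I_k}.
Definition payoff := {ffun position -> {ffun 'I_n -> R}}.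

Record mgame := MGame { act : payoff ; subj : {ffun 'I_n -> payoff} }.

Definition mixed := {ffun 'I_k -> R}.
Definition is_mixed (x : mixed) : Prop := (forall s, 0 <= x s) /\ \sum_s x s = 1.
Definition profile := {ffun 'I_n -> mixed}.

Definition exp_payoff (P : payoff) (sig : profile) (j : 'I_n) : R :=
  \sum_(p : position) (\prod_(i < n) sig i (p i)) * P p j.

Definition replace (sig : profile) (j : 'I_n) (tau : mixed) : profile :=
  [ffun i => if i == j then tau else sig i].

Definition is_NE (P : payoff) (sig : profile) : Prop :=
  (forall i, is_mixed (sig i)) /\
  forall j (tau : mixed), is_mixed tau ->
    exp_payoff P (replace sig j tau) j <= exp_payoff P sig j.

Definition NME (mG : mgame) (sig : profile) : Prop :=
  forall i, exists tau, is_NE (subj mG i) tau /\ sig i = tau i.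

Definition in_chi (sig : profile) (v : position) : Prop :=
  forall i, sig i (v i) != 0.

Definition adapt (mG : mgame) (v : position) : mgame :=
  MGame (act mG)
        [ffun i => [ffun p => if p == v then act mG v else subj mG i p]].

Definition ad_edge (mG1 mG2 : mgame) : Prop :=
  exists sig v, [/\ NME mG1 sig, in_chi sig v & mG2 = adapt mG1 v].

Definition AD (M : mgame -> Prop) : mgame -> Prop :=
  fun x => exists y, M y /\ ad_edge y x.

Fixpoint ADn (t : nat) (M : mgame -> Prop) : mgame -> Prop :=
  match t with 0 => M | t'.+1 => ADn t' (AD M) end.

Definition ADstar (M : mgame -> Prop) : mgame -> Prop :=
  fun x => exists t, ADn t M x.

Definition vertex (mG : mgame) : mgame -> Prop := ADstar (fun x => x = mG).

Definition gamma_edge (mG : mgame) (x y : mgame) : Prop :=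
  [/\ vertex mG x, vertex mG y & ad_edge x y].

Definition gamma'_edge (mG : mgame) (x y : mgame) : Prop :=
  gamma_edge mG x y /\ x <> y.

Definition source' (mG : mgame) (x : mgame) : Prop :=
  vertex mG x /\ ~ (exists y, gamma'_edge mG y x).

End MG.

From mathcomp Require Import all_boot all_order all_algebra.
From Stdlib Require Import Classical.

Set Implicit Arguments.
Unset Strict Implicit.
Unset Printing Implicit Defensive.

(* Every vertex other than mG is reached from mG by a chain of adaptations, and
   the last step of that chain which actually changes the game is an edge of
   the loopless graph into it; so no other vertex is a source.  Conversely,
   adapting never changes the actual game and only overwrites subjective
   payoffs by actual ones, so in every vertex y each subjective payoff is
   either that of mG or the actual one.  If y_v = mG, then at v the
   subjective payoffs of mG, hence of y, are already the actual ones, so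
   y_v = y: every edge into mG is a loop. *)

Section AdaptationGraph.
Variables (R : realFieldType) (n k : nat).
Implicit Types (M : mgame R n k -> Prop) (m x y : mgame R n k).

Lemma ADstar_base M x : M x -> ADstar M x.
Proof. by exists 0%N. Qed.

Lemma ADstar_AD M x : ADstar (AD M) x -> ADstar M x.
Proof. by move=> [t Hx]; exists t.+1. Qed.

Lemma ADstar_ind M (P : mgame R n k -> Prop) :
  (forall x, M x -> P x) -> (forall x y, P x -> ad_edge x y -> P y) ->
  forall x, ADstar M x -> P x.
Proof.
move=> PM Pedge x [t]; elim: t M PM x => [|t IHt] M PM x /=; first exact: PM.
by apply: IHt => y [z [Mz Ezy]]; apply: Pedge (PM z Mz) Ezy.
Qed.

Lemma ADstar_loopless_pred M x : ADstar M x ->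
  M x \/ exists y, [/\ ADstar M y, ad_edge y x & y <> x].
Proof.
move=> [t]; elim: t M => [|t IHt] M /= Hx; first by left.
case: (IHt _ Hx) => [[y [My Eyx]] | [y [Vy Eyx Nyx]]].
- case: (classic (y = x)) => [<- | Nyx]; first by left.
  by right; exists y; split=> //; apply: ADstar_base.
- by right; exists y; split=> //; apply: ADstar_AD.
Qed.

Lemma adapt_id y v : (forall i, subj y i v = act y v) -> adapt y v = y.
Proof.
case: y => a s /= Hv; rewrite /adapt /=; congr MGame.
by apply/ffunP => i; apply/ffunP => p; rewrite !ffunE; case: eqP => [->|].
Qed.

Definition adapted_from m y : Prop :=
  act y = act m /\ forall i p, subj y i p = subj m i p \/ subj y i p = act m p.

Lemma adapted_from_refl m : adapted_from m m.
Proof. by split=> // i p; left. Qed.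

Lemma adapted_from_adapt m y v :
  adapted_from m y -> adapted_from m (adapt y v).
Proof.
move=> [Ha Hs]; split=> //= i p; rewrite !ffunE.
by case: eqP => [->|_]; [right; rewrite Ha | apply: Hs].
Qed.

Lemma vertex_adapted_from m y : vertex m y -> adapted_from m y.
Proof.
apply: ADstar_ind => [x -> | x z Hx [sig [v [_ _ ->]]]].
  exact: adapted_from_refl.
exact: adapted_from_adapt Hx.
Qed.

Lemma adapt_eq_adapted_from m y v :
  adapted_from m y -> adapt y v = m -> y = m.
Proof.
move=> [Ha Hs] Ey; rewrite -[RHS]Ey adapt_id // => i.
have Hm : subj m i v = act y v by rewrite -Ey /= !ffunE eqxx.
by case: (Hs i v) => ->; rewrite ?Hm ?Ha.
Qed.

End AdaptationGraph.

Theorem proposition18 (R : realFieldType) (n k : nat) (mG : mgame R n k) :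
  forall x : mgame R n k, source' mG x <-> x = mG.
Proof.
move=> x; split.
  move=> [Vx no_pred]; case: (ADstar_loopless_pred Vx) => // [[y [Vy Eyx Nyx]]].
  by case: no_pred; exists y; split.
move=> ->; split; first exact: ADstar_base.
move=> [y [[Vy _ [sig [v [_ _ Ey]]]] Nyx]]; apply: Nyx.
exact: adapt_eq_adapted_from (vertex_adapted_from Vy) (esym Ey).
Qed.
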